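(* Let $G$ be a countable discrete group. Every $K_\sigma$ subgroup of $G^\omega$ is compactly generated if and only if every subgroup of $G$ is finitely generated.
   Context: $G^\omega$ carries the product topology. A subgroup $H$ of a topological group is compactly generated if $H=\langle K\rangle$ for some compact set $K$; it is $K_\sigma$ if it is a countable union of compact sets. *)

From HB Require Import structures.
From mathcomp Require Import all_boot.
From mathcomp Require Import monoid.
From mathcomp Require Import all_classical.
From mathcomp Require Import topology_structure compact discrete_topology function_spaces.

Set Implicit Arguments.
Unset Strict Implicit.
Unset Printing Implicit Defensive.

Local Open Scope classical_set_scope.
Local Open Scope group_scope.

Definition is_subgroup (T : groupType) (H : set T) : Prop :=
  H 1 /\ (forall x y, H x -> H y -> H (x * y)) /\ (forall x, H x -> H x^-1).

Definition generated (T : groupType) (A : set T) : set T :=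
  [set x | forall H : set T, is_subgroup H -> A `<=` H -> H x].

Definition finitely_generated (T : groupType) (H : set T) : Prop :=
  exists A : set T, finite_set A /\ H = generated A.

Definition Gomega (G : groupType) : Type :=
  prod_topology (fun _ : nat => discrete_topology G).

Section GomegaGroup.
Variable G : groupType.

HB.instance Definition _ :=
  Topological.copy (Gomega G) (prod_topology (fun _ : nat => discrete_topology G)).

Let one_w : Gomega G := fun _ => 1.
Let inv_w (f : Gomega G) : Gomega G := fun n => (f n)^-1.
Let mul_w (f g : Gomega G) : Gomega G := fun n => f n * g n.

Let mul_wA : associative mul_w.
Proof. by move=> f g h; apply: funext => n; rewrite /mul_w mulgA. Qed.
Let mul_1w : left_id one_w mul_w.
Proof. by move=> f; apply: funext => n; rewrite /mul_w mul1g. Qed.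
Let mul_w1 : right_id one_w mul_w.
Proof. by move=> f; apply: funext => n; rewrite /mul_w mulg1. Qed.
Let mul_Vw : left_inverse one_w inv_w mul_w.
Proof. by move=> f; apply: funext => n; rewrite /mul_w /inv_w mulVg. Qed.
Let mul_wV : right_inverse one_w inv_w mul_w.
Proof. by move=> f; apply: funext => n; rewrite /mul_w /inv_w mulgV. Qed.

HB.instance Definition _ :=
  isGroup.Build (Gomega G) mul_wA mul_1w mul_w1 mul_Vw mul_wV.

End GomegaGroup.

Definition compactly_generated (G : groupType) (H : set (Gomega G)) : Prop :=
  exists K : set (Gomega G), compact K /\ H = generated K.

Definition K_sigma (G : groupType) (H : set (Gomega G)) : Prop :=
  exists K : nat -> set (Gomega G),
    (forall n, compact (K n)) /\ H = \bigcup_n K n.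

From mathcomp Require Import all_boot monoid all_classical.
From mathcomp Require Import topology_structure compact discrete_topology function_spaces.
From mathcomp Require Import supremum_topology initial_topology subspace_topology.

Set Implicit Arguments.
Unset Strict Implicit.
Unset Printing Implicit Defensive.

Local Open Scope classical_set_scope.
Local Open Scope group_scope.

(** For (<-): write L = \bigcup_n K_n with K_n compact. For every k, the
    k-th coordinates of the elements of L that are trivial below k form a
    subgroup of G; lifting a finite generating set of it gives a finite
    T_k <= L trivial below k. The subgroup S generated by all T_k has the
    same layers as L, so each x in L agrees with some element of S on any
    finite prefix. A compact K_n has only finitely many length-n prefixes,
    hence K_n <= S B_n for a compact B_n <= L trivial below n. The set
    {1} u \bigcup_n (T_n u B_n) is compact, because its pieces accumulate
    only at 1, and it generates L.
    For (->): the diagonal copy of a subgroup H of G is countable, hence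
    K_sigma, hence generated by a compact set K; then H is generated by the
    projection of K to the first coordinate, which is finite as G is
    discrete. *)

Lemma compact_discrete_finite (T : choiceType) (A : set (discrete_topology T)) :
  compact A -> finite_set A.
Proof.
move=> cA; apply: contrapT => infA.
pose F : set_system (discrete_topology T) := [set B | finite_set (A `\` B)].
have FF : ProperFilter F.
  apply: Build_ProperFilter_ex.
    move=> B fB; apply: contrapT => nB; apply: infA.
    by apply: sub_finite_set fB => x Ax; split => // Bx; apply: nB; exists x.
  constructor; rewrite /F /=.
  - by rewrite setDT; exact: finite_set0.
  - by move=> B C fB fC; rewrite /= setDIr finite_setU.
  - move=> B C BC; apply: sub_finite_set => x [Ax nCx].
    by split=> // /BC.
have [|p [Ap clp]] := cA F FF; first by rewrite /F /= setDv; exact: finite_set0.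
have [|z [nz zp]] := clp (~` [set p]) [set p] _ (discrete_set1 p).
  by apply: sub_finite_set (finite_set1 p) => x [_ /contrapT].
by apply: nz.
Qed.

Lemma bigcup_finite_compact (T : topologicalType) (I : choiceType) (D : set I)
    (C : I -> set T) :
  finite_set D -> (forall i, compact (C i)) -> compact (\bigcup_(i in D) C i).
Proof. by move=> /finite_seqP[r ->] cC; rewrite bigcup_seq; exact: bigsetU_compact. Qed.

Section GomegaTopology.
Variable G : groupType.
Local Notation X := (Gomega G).
Implicit Types (x y : X) (n : nat).

Lemma GomegaM x y i : (x * y) i = x i * y i. Proof. by []. Qed.
Lemma GomegaV x i : x^-1 i = (x i)^-1. Proof. by []. Qed.

Lemma nbhs_coord x i : nbhs x [set y : X | y i = x i].
Proof.
exact: (@proj_continuous nat (fun=> discrete_topology G) i x _ (discrete_set1 _)).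
Qed.

Lemma cvg_Gomega (F : set_system X) {FF : Filter F} x :
  (forall i, F [set y : X | y i = x i]) -> F --> x.
Proof.
move=> Fx; apply/(@cvg_sup _ nat (fun i => Topological.class
  (initial_topology (fun f : nat -> discrete_topology G => f i))) F x FF).
move=> i U [V] [[W] _ <-] Wx WU.
by apply: filterS (Fx i) => y /= yx; apply: WU; rewrite /= yx.
Qed.

Lemma continuous_Gomega (T : topologicalType) (f : T -> X) :
  (forall t i, \forall s \near t, f s i = f t i) -> continuous f.
Proof. by move=> fl t; apply: cvg_Gomega => i; exact: fl. Qed.

Lemma lmul_continuous w : continuous (fun y : X => w * y).
Proof.
apply: continuous_Gomega => x i.
by apply: filterS (nbhs_coord x i) => y /=; rewrite !GomegaM => ->.
Qed.

Definition trivial_upto n : set X := [set y | forall i, (i < n)%N -> y i = 1].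

Lemma closed_trivial_upto n : closed (trivial_upto n).
Proof.
move=> y cly i ltin.
by have [z [/(_ i ltin) <- ->]] := cly _ (nbhs_coord y i).
Qed.

Lemma nbhs1_trivial_upto (V : set X) :
  nbhs (1 : X) V -> exists n, trivial_upto n `<=` V.
Proof.
move=> V1; apply: contrapT => noN.
have /choice[x xN] : forall n, exists x, trivial_upto n x /\ ~ V x.
  move=> n; apply: contrapT => nx; apply: noN; exists n => y Ny.
  by apply: contrapT => nVy; apply: nx; exists y.
have x1 : x @ \oo --> (1 : X).
  apply: cvg_Gomega => i; exists i.+1 => // n /= ltin.
  exact: (xN n).1.
have [M _ xMV] := x1 V V1.
exact: (xN M).2 (xMV M (leqnn M)).
Qed.

Lemma compact_setU1_bigcup (C : nat -> set X) :
  (forall n, compact (C n)) -> (forall n, C n `<=` trivial_upto n) ->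
  compact ([set 1] `|` \bigcup_n C n).
Proof.
move=> cC CN F FF FU.
(* Either F meets finitely many of the C k, whose union is compact, or every
   neighbourhood of 1 meets every set of F. *)
have [[n FUn]|Fnear1] := pselect (exists n, F (\bigcup_(k in `I_n) C k)).
  have [x [[k _ Ckx] clx]] := bigcup_finite_compact (finite_II n) cC FF FUn.
  by exists x; split => //; right; exists k.
exists 1; split; first by left.
move=> A B FA /nbhs1_trivial_upto[n NB]; apply: contrapT => AB; apply: Fnear1.
exists n; apply: filterS (filterI FU FA) => x [[->|[k _ Ckx]] Ax].
  by exfalso; apply: AB; exists 1; split => //; exact: NB.
have [ltkn|lenk] := ltnP k n; first by exists k.
exfalso; apply: AB; exists x; split => //; apply: NB => i ltin.
exact: CN Ckx i (leq_trans ltin lenk).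
Qed.

Definition prefix n x : discrete_topology (seq G) := [seq x i | i <- iota 0 n].

Lemma prefix_coord n x y i : prefix n x = prefix n y -> (i < n)%N -> x i = y i.
Proof.
move=> /(congr1 (fun s => nth 1 s i)) + ltin.
by rewrite /prefix !(nth_map 0) ?size_iota // nth_iota.
Qed.

Lemma nbhs_prefix n x : \forall y \near x, prefix n y = prefix n x.
Proof.
elim: n => [|n IHn]; first exact: filterE.
apply: filterS (filterI IHn (nbhs_coord x n)) => y [/= pre_eq yn].
by rewrite /prefix -addn1 iotaD !map_cat /= -/(prefix n x) -/(prefix n y) pre_eq yn.
Qed.

Lemma prefix_continuous n : continuous (prefix n).
Proof.
move=> x; have Fpre : Filter (prefix n @ x) by apply: fmap_filter; exact: nbhs_filter.
by apply/(@discrete_cvg _ _ (prefix n x) Fpre); exact: nbhs_prefix.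
Qed.

Lemma finite_prefix (K : set X) n : compact K -> finite_set (prefix n @` K).
Proof.
move=> cK; apply: compact_discrete_finite; apply: continuous_compact => //.
exact/continuous_subspaceT/prefix_continuous.
Qed.

End GomegaTopology.

Section Generated.
Variable T : groupType.
Implicit Types A B H : set T.

Lemma is_subgroup_generated A : is_subgroup (generated A).
Proof.
split; [|split].
- by move=> H [H1 _].
- by move=> x y Ax Ay H sH AH; case: (sH) => _ [HM _]; apply: HM; [exact: Ax|exact: Ay].
- by move=> x Ax H sH AH; case: (sH) => _ [_ HV]; apply: HV; exact: Ax.
Qed.

Lemma subset_generated A : A `<=` generated A.
Proof. by move=> x Ax H _; apply. Qed.

Lemma generated_subG A H : is_subgroup H -> A `<=` H -> generated A `<=` H.
Proof. by move=> sH AH x; apply. Qed.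

Lemma generatedS A B : A `<=` B -> generated A `<=` generated B.
Proof.
move=> AB; apply: generated_subG; first exact: is_subgroup_generated.
by move=> x /AB; exact: subset_generated.
Qed.

End Generated.

Lemma is_subgroup_preimage (T U : groupType) (f : T -> U) (H : set U) :
  {morph f : x y / x * y} -> is_subgroup H -> is_subgroup (f @^-1` H).
Proof.
move=> fM [H1 [HM HV]].
have f1 : f 1 = 1 by apply: (@mulgI _ (f 1)); rewrite -fM !mulg1.
split; [|split] => [|x y|x] /=; first by rewrite f1.
  by rewrite fM; exact: HM.
suff -> : f x^-1 = (f x)^-1 by exact: HV.
by apply/esym/mulg1_eq; rewrite -fM mulgV.
Qed.

Lemma image_generated_sub (T U : groupType) (f : T -> U) (A : set T) :
  {morph f : x y / x * y} -> f @` generated A `<=` generated (f @` A).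
Proof.
move=> fM _ [x Ax <-].
have sfA := is_subgroup_preimage fM (is_subgroup_generated (f @` A)).
apply: (generated_subG sfA) Ax => y Ay.
by apply: subset_generated; exists y.
Qed.

Section Layers.
Variable G : groupType.
Local Notation X := (Gomega G).
Implicit Types (S L : set X) (x w : X).

Definition layer S k : set G :=
  [set g | exists x, [/\ S x, trivial_upto k x & x k = g]].

Lemma is_subgroup_layer S k : is_subgroup S -> is_subgroup (layer S k).
Proof.
move=> [S1 [SM SV]]; split; [|split].
- by exists 1; split => // i _.
- move=> _ _ [x [Sx Nx <-]] [y [Sy Ny <-]]; exists (x * y); split => //.
    exact: SM.
  by move=> i ltik; rewrite GomegaM Nx // Ny // mulg1.
- move=> _ [x [Sx Nx <-]]; exists x^-1; split => //; first exact: SV.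
  by move=> i ltik; rewrite GomegaV Nx // invg1.
Qed.

Section Approximation.
Variables S L : set X.
Hypotheses (sS : is_subgroup S) (sL : is_subgroup L) (SL : S `<=` L).
Hypothesis layerLS : forall k, layer L k `<=` layer S k.

Lemma approx_subgroup n x : L x -> exists2 w, S w & trivial_upto n (w^-1 * x).
Proof.
move: sS sL => [S1 [SM _]] [_ [LM LV]] Lx.
elim: n => [|n [w Sw Nw]]; first by exists 1 => // i.
have /layerLS[u [Su Nu un]] : layer L n ((w^-1 * x) n).
  by exists (w^-1 * x); split => //; apply: LM => //; apply/LV/SL.
exists (w * u); first exact: SM.
move=> i; rewrite ltnS leq_eqVlt invgM -mulgA GomegaM GomegaV.
case/orP => [/eqP->|ltin]; first by rewrite un mulVg.
by rewrite (Nw i ltin) (Nu i ltin) invg1 mulg1.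
Qed.

Lemma compact_cofactors n (K : set X) : compact K -> K `<=` L ->
  exists B : set X, [/\ compact B, B `<=` L, B `<=` trivial_upto n &
    forall x, K x -> exists2 w, S w & B (w^-1 * x)].
Proof.
move=> cK KL; have [S1 _] := sS; have [_ [LM LV]] := sL.
have /choice[w wP] : forall s : seq G, exists w, S w /\
    forall x, K x -> prefix n x = s -> trivial_upto n (w^-1 * x).
  move=> s; have [[x0 [Kx0 <-]]|noK] := pselect (exists x0, K x0 /\ prefix n x0 = s).
    have [w Sw Nw] := approx_subgroup n (KL _ Kx0).
    exists w; split => // x Kx /prefix_coord x0x i ltin.
    by rewrite GomegaM (x0x i ltin); exact: Nw.
  by exists 1; split => // x Kx xs; exfalso; apply: noK; exists x.
exists (\bigcup_(s in prefix n @` K)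
  (((fun y => (w s)^-1 * y) @` K) `&` trivial_upto n)); split.
- apply: bigcup_finite_compact; first exact: finite_prefix.
  move=> s; apply: compact_closedI; last exact: closed_trivial_upto.
  apply: continuous_compact; last exact: cK.
  exact/continuous_subspaceT/lmul_continuous.
- move=> _ [s _ [[x Kx <-] _]]; apply: LM; last exact: KL.
  by apply/LV/SL; case: (wP s).
- by move=> y [s _ []].
- move=> x Kx; exists (w (prefix n x)); first by case: (wP (prefix n x)).
  exists (prefix n x); first by exists x.
  by split; [exists x | case: (wP (prefix n x)) => _; exact].
Qed.

End Approximation.
End Layers.

Section KsigmaCompactlyGenerated.
Variable G : groupType.
Local Notation X := (Gomega G).
Hypothesis fgG : forall H : set G, is_subgroup H -> finitely_generated H.

Lemma finite_layer_generators (L : set X) : is_subgroup L ->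
  exists T : nat -> set X, [/\ forall k, finite_set (T k),
    forall k, T k `<=` L, forall k, T k `<=` trivial_upto k &
    forall k, layer L k `<=` layer (generated (\bigcup_k T k)) k].
Proof.
move=> sL.
have /choice[A AP] k : exists A, finite_set A /\ layer L k = generated A.
  exact/fgG/is_subgroup_layer.
have /choice[lift liftP] : forall ka : nat * G, exists x,
    A ka.1 ka.2 -> [/\ L x, trivial_upto ka.1 x & x ka.1 = ka.2].
  move=> [k a]; have [Aa|] := pselect (A k a); last by exists 1.
  have [] : layer L k a by rewrite (AP k).2; exact: subset_generated.
  by move=> x xP; exists x.
pose T k := (fun a => lift (k, a)) @` A k.
exists T; split.
- by move=> k; apply: finite_image; case: (AP k).
- by move=> k _ [a Aa <-]; case: (liftP (k, a) Aa).
- by move=> k _ [a Aa <-]; case: (liftP (k, a) Aa).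
move=> k; rewrite (AP k).2; apply: generated_subG.
  exact/is_subgroup_layer/is_subgroup_generated.
move=> a Aa; have [_ Nx xk] := liftP (k, a) Aa; exists (lift (k, a)); split => //.
by apply: subset_generated; exists k => //; exists a.
Qed.

Lemma K_sigma_compactly_generated (L : set X) :
  is_subgroup L -> K_sigma L -> compactly_generated L.
Proof.
move=> sL [K [cK LK]].
have KL n : K n `<=` L by rewrite LK => x Kx; exists n.
have [T [finT TL TN layerLT]] := finite_layer_generators sL.
pose S := generated (\bigcup_k T k).
have SL : S `<=` L by apply: generated_subG => // x [k _ /TL].
have /choice[B BP] n := compact_cofactors (is_subgroup_generated _) sL SL layerLT
  n (cK n) (KL n).
exists ([set 1] `|` \bigcup_n (T n `|` B n)); split.
  apply: compact_setU1_bigcup => n.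
    by apply: compactU; [exact: finite_compact | case: (BP n)].
  by move=> x [/TN|]; [|case: (BP n) => _ _ BN _ /BN].
apply/seteqP; split => [x|]; last first.
  apply: generated_subG => // x [->|[n _ [/TL|]]] //; first by case: sL.
  by case: (BP n) => _ BL _ _ /BL.
rewrite LK => -[n _ Knx]; have [_ _ _ /(_ x Knx)[w Sw Bw]] := BP n.
have [_ [gM _]] := is_subgroup_generated ([set 1] `|` \bigcup_n (T n `|` B n)).
rewrite -[x](mulVKg w); apply: gM.
  by apply: generatedS Sw => y [k _ Tky]; right; exists k => //; left.
by apply: subset_generated; right; exists n => //; right.
Qed.

End KsigmaCompactlyGenerated.

Section FinitelyGeneratedSubgroups.
Variable G : groupType.
Local Notation X := (Gomega G).

Lemma countable_K_sigma (D : set X) : countable D -> K_sigma D.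
Proof.
move=> /countable_injP[f finj].
exists (fun n => D `&` f @^-1` [set n]); split.
  move=> n; apply: finite_compact.
  have [[x0 [Dx0 fx0]]|noD] := pselect (exists x0, D x0 /\ f x0 = n).
    apply: sub_finite_set (finite_set1 x0) => x [Dx fx].
    by apply: finj; rewrite ?inE // fx fx0.
  by apply: sub_finite_set (finite_set0 _) => x [Dx fx]; apply: noD; exists x.
by apply/seteqP; split => [x Dx|x [n _ []//]]; exists (f x).
Qed.

Definition diag (g : G) : X := fun=> g.

Lemma is_subgroup_diag (H : set G) : is_subgroup H -> is_subgroup (diag @` H).
Proof.
move=> [H1 [HM HV]]; split; [|split].
- by exists 1.
- by move=> _ _ [a Ha <-] [b Hb <-]; exists (a * b) => //; exact: HM.
- by move=> _ [a Ha <-]; exists a^-1 => //; exact: HV.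
Qed.

Lemma finitely_generated_of_diag (H : set G) :
  is_subgroup H -> compactly_generated (diag @` H) -> finitely_generated H.
Proof.
move=> sH [K [cK HK]].
have coord0M : {morph (fun x : X => x 0 : G) : x y / x * y} by [].
exists ((fun x : X => x 0 : G) @` K); split.
  apply: compact_discrete_finite; apply: continuous_compact => //.
  exact/continuous_subspaceT/(@proj_continuous nat (fun=> discrete_topology G)).
apply/seteqP; split => [h Hh|].
  by apply: image_generated_sub coord0M _ _; exists (diag h); rewrite // -HK; exists h.
apply: generated_subG => // _ [x Kx <-].
by have [h Hh <-] : (diag @` H) x by rewrite HK; exact: subset_generated.
Qed.

End FinitelyGeneratedSubgroups.

Theorem mainTheorem4 (G : groupType) (hG : countable [set: G]) :
  (forall H : set (Gomega G), is_subgroup H -> K_sigma H -> compactly_generated H)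
  <-> (forall H : set G, is_subgroup H -> finitely_generated H).
Proof.
split => [KcgG H sH|fgG H sH]; last exact: K_sigma_compactly_generated.
apply: finitely_generated_of_diag => //; apply: KcgG; first exact: is_subgroup_diag.
apply/countable_K_sigma/(sub_countable (card_image_le _ _)).
exact: sub_countable (subset_card_le (@subsetT _ H)) hG.
Qed.
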